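(* Let $S$ be a numerical semigroup with minimal generators $e<a_1<\dots<a_t$, and let $s\in S$ and $r\in\mathbb N$. (1) If $\mathbf x=(x_0,\dots,x_t)$ is an $S$-factorization of $s$ of length $r$, then $(0,x_1,\dots,x_t)$ is a $B^{\mathcal D}$-factorization of $s-re$ of length at most $r$. (2) If $\mathbf y=(y_0,\dots,y_t)$ is a $B^{\mathcal D}$-factorization of $s-re$ of length at most $r$, then $(2y_0+r-|\mathbf y|,y_1,\dots,y_t)$ is an $S$-factorization of $s$ of length $r+y_0$; in particular ${\rm ord}(s;S)\ge r$.
   Context: A numerical semigroup is a submonoid of $(\mathbb N,+)$ with finite complement. An $S$-factorization of $n\in S$ is $(c_0,\dots,c_t)\in\mathbb N^{t+1}$ with $c_0e+\sum_{i\ge1}c_ia_i=n$; its length is $\sum c_i$. ${\rm ord}(n;S)$ is the maximal such length. Let $d_i=a_i-e$, let $B=\langle e,d_1,\dots,d_t\rangle$ be the blowup, and $\mathcal D=(e,d_1,\dots,d_t)$. A $B^{\mathcal D}$-factorization of an integer $b$ is $(x_0,\dots,x_t)\in\mathbb N^{t+1}$ with $x_0e+\sum_{i\ge1}x_id_i=b$; its length $|\mathbf x|$ is $\sum x_i$. *)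

From mathcomp Require Import all_boot all_order all_algebra.
Set Implicit Arguments. Unset Strict Implicit. Unset Printing Implicit Defensive.
Import GRing.Theory Num.Theory.

(* Generators: e (index 0) and a_1 < ... < a_t, represented as a : 'I_t -> nat
   (a i is a_{i+1}).  A factorization (c_0,c_1,...,c_t) is a pair
   (c0 : nat, c : 'I_t -> nat). *)

Definition numerical_semigroup (S : pred nat) : Prop :=
  [/\ 0 \in S,
      (forall m n, m \in S -> n \in S -> m + n \in S) &
      exists N, forall n, N <= n -> n \in S].

Definition flen (t : nat) (c0 : nat) (c : 'I_t -> nat) : nat :=
  (c0 + \sum_(i < t) c i)%N.

Definition S_fact (t e : nat) (a : 'I_t -> nat) (n : nat)
    (c0 : nat) (c : 'I_t -> nat) : Prop :=
  (c0 * e + \sum_(i < t) c i * a i)%N = n.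

Definition B_fact (t e : nat) (a : 'I_t -> nat) (b : int)
    (x0 : nat) (x : 'I_t -> nat) : Prop :=
  (x0%:Z * e%:Z + \sum_(i < t) (x i)%:Z * ((a i)%:Z - e%:Z))%R = b.

Definition min_gens (S : pred nat) (t e : nat) (a : 'I_t -> nat) : Prop :=
  [/\ (forall n, n \in S <-> exists c0 c, S_fact e a n c0 c),
      (forall i, e < a i),
      (forall i j : 'I_t, i < j -> a i < a j),
      ~ (exists c : 'I_t -> nat, (\sum_(i < t) c i * a i)%N = e) &
      (forall i, ~ (exists c0 (c : 'I_t -> nat), c i = 0 /\ S_fact e a (a i) c0 c))].

(* ord(n;S): maximal length of an S-factorization of n.  Since every
   generator is >= 1, every component of a factorization of n is <= n and its
   length is <= n, so a bounded search is exhaustive. *)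
Definition has_fact_len (t e : nat) (a : 'I_t -> nat) (n l : nat) : bool :=
  [exists c0 : 'I_n.+1, exists c : {ffun 'I_t -> 'I_n.+1},
     ((c0 * e + \sum_(i < t) c i * a i)%N == n) &&
     ((c0 + \sum_(i < t) c i)%N == l)].

Definition ord (t e : nat) (a : 'I_t -> nat) (n : nat) : nat :=
  \max_(l < n.+1 | has_fact_len e a n l) l.

(* Since a_i = e + d_i, every factorization of length r of s contributes exactly r e plus its
   d_i-part, so subtracting r e turns it into a B^D-factorization of s - r e with no e.
   Conversely, from a B^D-factorization (y_0, y) of s - r e with |y| <= r, adding back r e
   gives s: one copy of e for each d_i-summand rebuilds the a_i, and the remaining
   r - |y| copies join the y_0 copies of e already present, giving the coefficient
   2 y_0 + r - |y| and length r + y_0 >= r. *)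

From mathcomp Require Import all_boot all_order all_algebra.
From mathcomp Require Import zify.
Import GRing.Theory Num.Theory.

Set Implicit Arguments.
Unset Strict Implicit.

Section Factorizations.

Variables (t e : nat) (a : 'I_t -> nat).
Hypothesis gens_gt_e : forall i, e < a i.

Lemma B_fact_natE (b : int) (x0 : nat) (x : 'I_t -> nat) :
  B_fact e a b x0 x <-> b = Posz (x0 * e + \sum_(i < t) x i * (a i - e))%N.
Proof.
rewrite /B_fact.
have -> : (\sum_(i < t) (x i)%:Z * ((a i)%:Z - e%:Z))%R
        = Posz (\sum_(i < t) x i * (a i - e))%N.
  rewrite (big_morph Posz PoszD (erefl (Posz 0))).
  by apply: eq_bigr => i _; rewrite (subzn (ltnW (gens_gt_e i))) -PoszM.
by rewrite -PoszM -PoszD; split => <-.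
Qed.

Lemma sum_mul_gens_split (x : 'I_t -> nat) :
  (\sum_(i < t) x i * a i
     = \sum_(i < t) x i * (a i - e) + (\sum_(i < t) x i) * e)%N.
Proof.
rewrite big_distrl -big_split /=.
by apply: eq_bigr => i _; rewrite -mulnDr subnK // ltnW.
Qed.

Lemma S_fact_B_fact_shift (s x0 : nat) (x : 'I_t -> nat) :
  S_fact e a s x0 x ->
  B_fact e a (s%:Z - (flen x0 x * e)%:Z)%R 0 x /\ flen 0 x <= flen x0 x.
Proof.
rewrite /S_fact /flen sum_mul_gens_split B_fact_natE => <-.
split; last by rewrite leq_add2r.
by rewrite subzn; [congr Posz|]; lia.
Qed.

Lemma B_fact_S_fact_shift (s r y0 : nat) (y : 'I_t -> nat) :
  B_fact e a (s%:Z - (r * e)%:Z)%R y0 y -> flen y0 y <= r ->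
  S_fact e a s (2 * y0 + r - flen y0 y) y /\
  flen (2 * y0 + r - flen y0 y) y = r + y0.
Proof.
rewrite B_fact_natE /S_fact /flen sum_mul_gens_split => Hb Hr.
set Sy := \sum_(i < t) y i in Hr *; set Sd := \sum_(i < t) _ in Hb *.
have Hs : s = (y0 * e + Sd + r * e)%N.
  have : (s%:Z = Posz (y0 * e + Sd)%N + (r * e)%:Z)%R by rewrite -Hb subrK.
  by rewrite -PoszD => -[].
have -> : (2 * y0 + r - (y0 + Sy) = y0 + (r - Sy))%N by lia.
split; [rewrite Hs; nia | lia].
Qed.

(* Not implied by [gens_gt_e] when t = 0. *)
Hypothesis e_gt0 : 0 < e.

Lemma has_fact_len_S_fact (s c0 : nat) (c : 'I_t -> nat) :
  S_fact e a s c0 c -> has_fact_len e a s (flen c0 c).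
Proof.
rewrite /S_fact => Hs.
have c0_lt : c0 < s.+1 by rewrite -Hs; nia.
have c_lt i : c i < s.+1.
  by rewrite -Hs ltnS (bigD1 i) //=; have := gens_gt_e i; nia.
apply/existsP; exists (Ordinal c0_lt).
apply/existsP; exists [ffun i => Ordinal (c_lt i)].
by apply/andP; split; apply/eqP; under eq_bigr do rewrite ffunE.
Qed.

Lemma fact_len_le (s l : nat) : has_fact_len e a s l -> l <= s.
Proof.
case/existsP=> c0 /existsP [c] /andP [/eqP Hs /eqP <-].
apply: leq_trans (eq_leq Hs); rewrite leq_add ?leq_pmulr //.
by apply: leq_sum => i _; rewrite leq_pmulr // (leq_ltn_trans _ (gens_gt_e i)).
Qed.

Lemma ord_ge_flen (s c0 : nat) (c : 'I_t -> nat) :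
  S_fact e a s c0 c -> flen c0 c <= ord e a s.
Proof.
move/has_fact_len_S_fact => Hl.
have Hlt : flen c0 c < s.+1 by rewrite ltnS fact_len_le.
exact: (@leq_bigmax_cond _ (fun l : 'I_s.+1 => has_fact_len e a s l)
          (fun l => nat_of_ord l) (Ordinal Hlt) Hl).
Qed.

End Factorizations.

Lemma min_gens_e_gt0 (S : pred nat) (t e : nat) (a : 'I_t -> nat) :
  min_gens S e a -> 0 < e.
Proof.
case=> _ _ _ e_not_gen _; case: (posnP e) => // e0; case: e_not_gen.
by exists (fun _ => 0); rewrite e0 big1.
Qed.

Theorem lemma2p2 (S : pred nat) (t e : nat) (a : 'I_t -> nat) (s r : nat) :
  numerical_semigroup S -> min_gens S e a -> s \in S ->
  (forall (x0 : nat) (x : 'I_t -> nat),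
      S_fact e a s x0 x -> flen x0 x = r ->
      B_fact e a (s%:Z - (r * e)%:Z)%R 0 x /\ flen 0 x <= r) /\
  (forall (y0 : nat) (y : 'I_t -> nat),
      B_fact e a (s%:Z - (r * e)%:Z)%R y0 y -> flen y0 y <= r ->
      [/\ S_fact e a s (2 * y0 + r - flen y0 y) y,
          flen (2 * y0 + r - flen y0 y) y = r + y0
        & r <= ord e a s]).
Proof.
move=> _ gens _; have e_gt0 := min_gens_e_gt0 gens.
case: gens => _ gens_gt_e _ _ _.
split=> [x0 x Hx <- | y0 y Hy Hlen]; first exact: S_fact_B_fact_shift.
have [Hs Hl] := B_fact_S_fact_shift gens_gt_e Hy Hlen.
split=> //; apply: leq_trans (leq_addr y0 r) _.
by rewrite -Hl; apply: ord_ge_flen.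
Qed.
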